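(* Let $\mathcal M^\times\subset\mathcal M^\times_{n,d,q}$ be the unique irreducible component containing the subvariety $\mathcal M^\times_{n,1,q}$ (embedded by $V_\alpha=W_\alpha=0$ for $\alpha\ge2$). Then the maps $p_x,p_z:\mathcal M^\times\to\mathrm{Mat}_{n\times n}$, $p_x(X,Z,V_\alpha,W_\alpha)=X$, $p_z(X,Z,V_\alpha,W_\alpha)=Z$, have dense image. In particular, at a generic point of $\mathcal M^\times$ both $X$ and $Z$ have simple spectrum.
   Context: Fix integers $n,d\ge1$ and $q\in\mathbb C^\times$ not a root of unity. $\mathcal M^\times_{n,d,q}$ is the affine variety of tuples $(X,Z,V_1,\dots,V_d,W_1,\dots,W_d)$ with $X,Z\in\mathrm{GL}_n(\mathbb C)$, $V_\alpha\in\mathrm{Mat}_{1\times n}$, $W_\alpha\in\mathrm{Mat}_{n\times1}$, every $\mathrm{Id}_n+W_\alpha V_\alpha$ invertible, and $XZX^{-1}Z^{-1}(\mathrm{Id}_n+W_1V_1)^{-1}\cdots(\mathrm{Id}_n+W_dV_d)^{-1}=q\,\mathrm{Id}_n$. *)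

From HB Require Import structures.
From mathcomp Require Import all_boot all_order all_algebra.
From mathcomp Require Import complex.
From mathcomp Require Import Rstruct.
Set Implicit Arguments. Unset Strict Implicit. Unset Printing Implicit Defensive.
Import Order.TTheory GRing.Theory Num.Theory.
Local Open Scope ring_scope.

Notation CC := (complex Rdefinitions.R).

Inductive polyfun (T I : Type) (c : I -> T -> CC) : (T -> CC) -> Prop :=
  | pf_const (a : CC) : polyfun c (fun _ => a)
  | pf_coord (i : I) : polyfun c (c i)
  | pf_add f g : polyfun c f -> polyfun c g -> polyfun c (fun x => f x + g x)
  | pf_mul f g : polyfun c f -> polyfun c g -> polyfun c (fun x => f x * g x).

Definition zclosed (T I : Type) (c : I -> T -> CC) (S : T -> Prop) : Prop :=
  exists P : (T -> CC) -> Prop,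
    (forall f, P f -> polyfun c f) /\
    (forall x, S x <-> (forall f, P f -> f x = 0)).

Definition zirreducible (T I : Type) (c : I -> T -> CC) (Y : T -> Prop) : Prop :=
  (exists x, Y x) /\
  forall S1 S2, zclosed c S1 -> zclosed c S2 ->
    (forall x, Y x -> S1 x \/ S2 x) ->
    (forall x, Y x -> S1 x) \/ (forall x, Y x -> S2 x).

Definition irred_component (T I : Type) (c : I -> T -> CC) (X Y : T -> Prop) : Prop :=
  (forall x, Y x -> X x) /\ zirreducible c Y /\
  forall Y', (forall x, Y' x -> X x) -> zirreducible c Y' ->
    (forall x, Y x -> Y' x) -> forall x, Y' x -> Y x.

Definition zdense (T I : Type) (c : I -> T -> CC) (A : T -> Prop) : Prop :=
  forall f, polyfun c f -> (forall x, A x -> f x = 0) -> forall x, f x = 0.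

(* Points of the ambient affine space: (X, Z, (V_a)_a, (W_a)_a); the index
   a : 'I_d stands for alpha = a + 1. *)
Definition pt (n d : nat) : Type :=
  ('M[CC]_n * 'M[CC]_n * ('I_d -> 'rV[CC]_n) * ('I_d -> 'cV[CC]_n))%type.

Definition ptX n d (p : pt n d) : 'M[CC]_n := p.1.1.1.
Definition ptZ n d (p : pt n d) : 'M[CC]_n := p.1.1.2.
Definition ptV n d (p : pt n d) : 'I_d -> 'rV[CC]_n := p.1.2.
Definition ptW n d (p : pt n d) : 'I_d -> 'cV[CC]_n := p.2.

Definition pt_coord n d
  (i : (('I_n * 'I_n) + ('I_n * 'I_n) + ('I_d * 'I_n) + ('I_d * 'I_n))%type)
  (p : pt n d) : CC :=
  match i with
  | inl (inl (inl (k, l))) => ptX p k l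
  | inl (inl (inr (k, l))) => ptZ p k l
  | inl (inr (a, l)) => ptV p a 0 l
  | inr (a, k) => ptW p a k 0
  end.

Definition mx_coord n (i : ('I_n * 'I_n)%type) (A : 'M[CC]_n) : CC := A i.1 i.2.

Definition Mx (n d : nat) (q : CC) (p : pt n d) : Prop :=
  ptX p \in unitmx /\ ptZ p \in unitmx /\
  (forall a, (1%:M + ptW p a *m ptV p a) \in unitmx) /\
  ptX p *m ptZ p *m invmx (ptX p) *m invmx (ptZ p) *m
    \big[mulmx/1%:M]_(a < d) invmx (1%:M + ptW p a *m ptV p a)
  = q%:M.

Definition Mx1_embedded (n d : nat) (q : CC) (p : pt n d) : Prop :=
  Mx q p /\ forall a : 'I_d, (a : nat) != 0%N -> ptV p a = 0 /\ ptW p a = 0.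

Definition simple_spectrum n (A : 'M[CC]_n) : Prop :=
  exists s : seq CC, uniq s /\ size s = n /\ all (eigenvalue A) s.

(* Already on the copy of M^x_{n,1,q}, X and Z range over Zariski dense sets.
   If the entries of x are pairwise distinct and no two are in ratio q, then
   X = diag x and Z = C diag x, with C = ((x_i - q x_j)^-1) a Cauchy matrix,
   satisfy XZ - qZX = (rank one), which is exactly what is needed to complete
   (X, Z) to a point of M^x_{n,1,q}; so do X = C^T and Z = diag x, and the
   construction is stable under simultaneous conjugation.  Conjugates of such
   diagonal matrices are dense: triangularize any A and move the diagonal along
   the line T_ii + q^(2i) t, which leaves the good locus only for finitely
   many t.  Finally, the discriminant of the characteristic polynomial is a
   polynomial function that does not vanish identically on the images of p_x
   and p_z, so by irreducibility of M both discriminants are nonzero on a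
   nonempty open subset of M, where X and Z then have simple spectrum. *)

From mathcomp Require Import all_boot all_order all_algebra all_field.
From mathcomp Require Import complex Rstruct ring.
From Stdlib Require Import FunctionalExtensionality Classical.
Import GRing.Theory Num.Theory.
Local Open Scope ring_scope.
Set Implicit Arguments. Unset Strict Implicit. Unset Printing Implicit Defensive.

Lemma eqfun_pred (T U : Type) (P : (T -> U) -> Prop) (f g : T -> U) :
  P f -> f =1 g -> P g.
Proof. by move=> Pf /functional_extensionality <-. Qed.

Section ClosedFunctionAlgebra.
Variables (T : Type) (R : comNzRingType) (P : (T -> R) -> Prop).
Hypotheses (P_const : forall a, P (fun _ => a))
  (P_add : forall f g, P f -> P g -> P (fun x => f x + g x))
  (P_mul : forall f g, P f -> P g -> P (fun x => f x * g x)).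

Lemma closed_fun_sum (J : Type) (r : seq J) (F : J -> T -> R) :
  (forall j, P (F j)) -> P (fun x => \sum_(j <- r) F j x).
Proof.
move=> PF; elim: r => [|j r IHr].
  by apply: eqfun_pred (P_const 0) _ => x; rewrite big_nil.
by apply: eqfun_pred (P_add (PF j) IHr) _ => x; rewrite big_cons.
Qed.

Lemma closed_fun_prod (J : Type) (r : seq J) (F : J -> T -> R) :
  (forall j, P (F j)) -> P (fun x => \prod_(j <- r) F j x).
Proof.
move=> PF; elim: r => [|j r IHr].
  by apply: eqfun_pred (P_const 1) _ => x; rewrite big_nil.
by apply: eqfun_pred (P_mul (PF j) IHr) _ => x; rewrite big_cons.
Qed.

Lemma closed_fun_det n (A : T -> 'M[R]_n) :
  (forall i j, P (fun x => A x i j)) -> P (fun x => \det (A x)).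
Proof.
move=> PA; apply: closed_fun_sum => s.
by apply: P_mul => //; apply: closed_fun_prod.
Qed.

End ClosedFunctionAlgebra.

Section PolynomialFunctions.
Variables (T I : Type) (c : I -> T -> CC).

Lemma polyfun_muln f k : polyfun c f -> polyfun c (fun x => f x *+ k).
Proof.
move=> Pf; apply: eqfun_pred (pf_mul Pf (pf_const c k%:R)) _ => x.
by rewrite mulr_natr.
Qed.

Lemma polyfun_det n (A : T -> 'M[CC]_n) :
  (forall i j, polyfun c (fun x => A x i j)) -> polyfun c (fun x => \det (A x)).
Proof.
by apply: closed_fun_det => [a|f g|f g]; [apply: pf_const|apply: pf_add|apply: pf_mul].
Qed.

Definition polyfun_coefs (F : T -> {poly CC}) :=
  forall k, polyfun c (fun x => (F x)`_k).

Lemma polyfun_coefs_const p : polyfun_coefs (fun _ => p).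
Proof. by move=> k; apply: pf_const. Qed.

Lemma polyfun_coefsC f : polyfun c f -> polyfun_coefs (fun x => (f x)%:P).
Proof.
move=> Pf [|k]; first by apply: eqfun_pred Pf _ => x; rewrite coefC.
by apply: eqfun_pred (pf_const c 0) _ => x; rewrite coefC.
Qed.

Lemma polyfun_coefsD F G :
  polyfun_coefs F -> polyfun_coefs G -> polyfun_coefs (fun x => F x + G x).
Proof.
by move=> PF PG k; apply: eqfun_pred (pf_add (PF k) (PG k)) _ => x; rewrite coefD.
Qed.

Lemma polyfun_coefsM F G :
  polyfun_coefs F -> polyfun_coefs G -> polyfun_coefs (fun x => F x * G x).
Proof.
move=> PF PG k; apply: eqfun_pred _ (fun x => esym (coefM (F x) (G x) k)).
apply: closed_fun_sum => [a|f g|i]; first exact: pf_const; first exact: pf_add.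
exact: pf_mul.
Qed.

Lemma polyfun_coefs_char_poly n (A : T -> 'M[CC]_n) :
  (forall i j, polyfun c (fun x => A x i j)) ->
  polyfun_coefs (fun x => char_poly (A x)).
Proof.
move=> PA; apply: closed_fun_det => [p|F G|F G|i j].
- exact: polyfun_coefs_const.
- exact: polyfun_coefsD.
- exact: polyfun_coefsM.
apply: eqfun_pred (polyfun_coefsD (polyfun_coefs_const ('X *+ (i == j)))
  (polyfun_coefsC (pf_mul (pf_const c (-1)) (PA i j)))) _ => x.
by rewrite !mxE mulN1r polyCN.
Qed.

Lemma polyfun_along (g : CC -> T) f :
  (forall i, exists p : {poly CC}, forall t, c i (g t) = p.[t]) ->
  polyfun c f -> exists p : {poly CC}, forall t, f (g t) = p.[t].
Proof.
move=> Pg; elim=> [a|i|f1 f2 _ [p1 E1] _ [p2 E2]|f1 f2 _ [p1 E1] _ [p2 E2]].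
- by exists a%:P => t; rewrite hornerC.
- exact: Pg.
- by exists (p1 + p2) => t; rewrite hornerD E1 E2.
- by exists (p1 * p2) => t; rewrite hornerM E1 E2.
Qed.

Lemma zclosed_zero_set g : polyfun c g -> zclosed c (fun x => g x = 0).
Proof.
move=> Pg; exists (fun f => f = g); split=> [f -> //|x].
by split=> [gx0 f -> //|]; apply.
Qed.

Lemma zdense_sub (A B : T -> Prop) :
  zdense c A -> (forall x, A x -> B x) -> zdense c B.
Proof. by move=> dA AB f Pf fB; apply: dA => // x /AB /fB. Qed.

Lemma zdense_nonvanishing (A : T -> Prop) f x0 :
  zdense c A -> polyfun c f -> f x0 != 0 -> exists2 a, A a & f a != 0.
Proof.
move=> dA Pf /eqP fx0; apply: NNPP => noA; apply: fx0; apply: dA => // a Aa.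
by apply/eqP/negPn/negP => fa0; apply: noA; exists a.
Qed.

Lemma zirreducible_mul_neq0 (Y : T -> Prop) g1 g2 :
  zirreducible c Y -> polyfun c g1 -> polyfun c g2 ->
  (exists2 y, Y y & g1 y != 0) -> (exists2 y, Y y & g2 y != 0) ->
  exists2 y, Y y & g1 y * g2 y != 0.
Proof.
move=> [_ irrY] Pg1 Pg2 [y1 Yy1 g1y1] [y2 Yy2 g2y2]; apply: NNPP => noY.
have Y0 y : Y y -> g1 y = 0 \/ g2 y = 0.
  move=> Yy; have [|g1y] := eqVneq (g1 y) 0; [by left|right].
  by apply/eqP/contraT => g2y; case: noY; exists y; rewrite ?mulf_neq0.
have [/(_ y1 Yy1)|/(_ y2 Yy2)] := irrY _ _ (zclosed_zero_set Pg1) (zclosed_zero_set Pg2) Y0.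
  by move/eqP; rewrite (negPf g1y1).
by move/eqP; rewrite (negPf g2y2).
Qed.

End PolynomialFunctions.

Lemma polyfun_comp (T1 I1 T2 I2 : Type) (c1 : I1 -> T1 -> CC) (c2 : I2 -> T2 -> CC)
    (h : T2 -> T1) f :
  (forall i, polyfun c2 (fun x => c1 i (h x))) ->
  polyfun c1 f -> polyfun c2 (fun x => f (h x)).
Proof.
move=> Ph; elim=> [a|i|f1 f2 _ P1 _ P2|f1 f2 _ P1 _ P2].
- exact: pf_const.
- exact: Ph.
- exact: pf_add.
- exact: pf_mul.
Qed.

Lemma polyfun_ptX n d f :
  polyfun (@mx_coord n) f -> polyfun (@pt_coord n d) (fun p => f (ptX p)).
Proof. by apply: polyfun_comp => -[i j]; apply: (pf_coord _ (inl (inl (inl (i, j))))). Qed.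

Lemma polyfun_ptZ n d f :
  polyfun (@mx_coord n) f -> polyfun (@pt_coord n d) (fun p => f (ptZ p)).
Proof. by apply: polyfun_comp => -[i j]; apply: (pf_coord _ (inl (inl (inr (i, j))))). Qed.

Lemma poly_eq0_off_root (R : numDomainType) (Q p : {poly R}) :
  Q != 0 -> (forall t, ~~ root Q t -> p.[t] = 0) -> p = 0.
Proof.
move=> Q0 pQ; suff /eqP : p * Q = 0 by rewrite mulf_eq0 (negPf Q0) orbF => /eqP.
apply: (@roots_geq_poly_eq0 _ _ [seq i%:R | i <- iota 0 (size (p * Q))]).
- apply/allP => _ /mapP[i _ ->]; rewrite /root hornerM.
  by have [/eqP->|/pQ->] := boolP (root Q i%:R); rewrite ?mulr0 ?mul0r.
- by rewrite map_inj_uniq ?iota_uniq // => i j /eqP; rewrite eqr_nat => /eqP.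
- by rewrite size_map size_iota.
Qed.

Lemma lin_polys_avoid (R : idomainType) (I : finType) (P : pred I) (a b : I -> R) :
  (forall i, P i -> b i != 0) ->
  exists2 Q : {poly R}, Q != 0 &
    forall t, ~~ root Q t -> forall i, P i -> a i + b i * t != 0.
Proof.
move=> b0; exists (\prod_(i | P i) ((a i)%:P + b i *: 'X)).
  apply/prodf_neq0 => i Pi; apply/eqP => /(congr1 (fun p : {poly R} => p`_1)).
  by rewrite coefD coefC coefZ coefX mulr1 add0r coef0; apply/eqP/b0.
move=> t; rewrite /root horner_prod => /prodf_neq0 Qt i /Qt.
by rewrite hornerD hornerC hornerZ hornerX.
Qed.

Lemma expr_inj_not_unity (R : idomainType) (q : R) :
  q != 0 -> (forall k, (0 < k)%N -> q ^+ k != 1) -> injective (GRing.exp q).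
Proof.
move=> q0 q1; suff le_inj a b : (a <= b)%N -> q ^+ a = q ^+ b -> a = b.
  by move=> a b qab; case/orP: (leq_total a b) => /le_inj; [apply | move/(_ (esym qab))].
move=> le_ab qab; apply/eqP; rewrite eqn_leq le_ab /= leqNgt; apply/negP => lt_ab.
have qba : q ^+ (b - a) = 1.
  apply: (mulIf (expf_neq0 a q0)).
  by rewrite -exprD subnK ?mul1r //; apply: ltnW.
by have := q1 (b - a)%N; rewrite subn_gt0 lt_ab qba eqxx => /(_ isT).
Qed.

Definition cauchy_mx (F : fieldType) n (x y : 'I_n -> F) : 'M[F]_n :=
  \matrix_(i, j) (x i - y j)^-1.

Section CauchyMatrix.
Variables (F : fieldType) (n : nat) (x y : 'I_n -> F).
Hypotheses (x_inj : injective x) (y_inj : injective y) (xy : forall i j, x i != y j).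

Let lagrange_numer i := \prod_(k | k != i) ('X - (x k)%:P).

Let size_lagrange_numer i : (size (lagrange_numer i) <= n)%N.
Proof.
rewrite /lagrange_numer -big_filter size_prod_XsubC.
rewrite (_ : size _ = #|predC1 i|); last by rewrite cardE.
by rewrite cardC1 card_ord prednK //; apply: leq_ltn_trans (ltn_ord i).
Qed.

Let lagrange_numer_y i j :
  (lagrange_numer i).[y j] = - \prod_k (y j - x k) * (x i - y j)^-1.
Proof.
rewrite [in RHS](bigD1 i) //= -mulNr opprB mulrAC mulfV ?subr_eq0 ?xy // mul1r.
by rewrite horner_prod; apply: eq_bigr => k _; rewrite hornerXsubC.
Qed.

Let lagrange_numer_x i m :
  ((lagrange_numer i).[x m] == 0) = (i != m).
Proof.
rewrite horner_prod; apply/prodf_eq0/idP => [[k ki]|im].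
  by rewrite hornerXsubC subr_eq0 => /eqP/x_inj->; rewrite eq_sym.
by exists m; rewrite ?hornerXsubC ?subrr // eq_sym.
Qed.

Lemma cauchy_mx_unit : cauchy_mx x y \in unitmx.
Proof.
(* A left kernel vector [v] gives the polynomial [N] below, of degree < n,
   vanishing at the n points [y j]; so [N = 0], and evaluating at [x m]
   gives [v_m = 0]. *)
rewrite unitmxE unitfE; apply/negP => /det0P[v /negP v0 vC]; apply: v0.
pose N := \sum_i v 0 i *: lagrange_numer i.
have N_y j : N.[y j] = 0.
  have /rowP/(_ j) := vC; rewrite !mxE; under eq_bigr do rewrite mxE; move=> vCj.
  rewrite horner_sum (eq_bigr (fun i => - \prod_k (y j - x k) * (v 0 i * (x i - y j)^-1))).
    by rewrite -mulr_sumr vCj mulr0.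
  by move=> i _; rewrite hornerZ lagrange_numer_y mulrCA.
have N0 : N = 0.
  apply: (@roots_geq_poly_eq0 _ _ [seq y j | j <- enum 'I_n]).
  - by apply/allP => _ /mapP[j _ ->]; apply/eqP/N_y.
  - by rewrite map_inj_uniq ?enum_uniq.
  - rewrite size_map size_enum_ord (leq_trans (size_sum _ _ _)) //.
    by apply/bigmax_leqP => i _; rewrite (leq_trans (size_scale_leq _ _)).
apply/eqP/rowP => m; rewrite mxE; have /eqP := congr1 (horner^~ (x m)) N0.
rewrite horner0 horner_sum (bigD1 m) //= big1 => [|i im]; last first.
  by rewrite hornerZ; apply/eqP; rewrite mulf_eq0 lagrange_numer_x im orbT.
by rewrite addr0 hornerZ mulf_eq0 lagrange_numer_x eqxx orbF => /eqP.
Qed.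

End CauchyMatrix.

Definition q_generic (F : fieldType) (I : finType) (q : F) (x : I -> F) :=
  injective x /\ forall i j, x i != q * x j.

Section QGeneric.
Variables (F : fieldType) (q : F).

Lemma q_generic_neq0 (I : finType) (x : I -> F) i : q_generic q x -> x i != 0.
Proof. by case=> _ /(_ i i); apply: contraNneq => ->; rewrite mulr0. Qed.

Lemma q_generic_perm (I J : finType) (x : I -> F) (y : J -> F) :
  perm_eq (codom x) (codom y) -> q_generic q x -> q_generic q y.
Proof.
move=> xy [x_inj xq]; split.
  by apply/injectiveP; rewrite /injectiveb /dinjectiveb -(perm_uniq xy); apply/injectiveP.
move=> i j; have /codomP[k ->] : y i \in codom x by rewrite (perm_mem xy) codom_f.
by have /codomP[l ->] : y j \in codom x by rewrite (perm_mem xy) codom_f.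
Qed.

Lemma q_generic_line n (y : 'I_n -> F) :
  q != 0 -> (forall k, (0 < k)%N -> q ^+ k != 1) ->
  exists2 Q : {poly F}, Q != 0 &
    forall t, ~~ root Q t -> q_generic q (fun i => y i + q ^+ (i : nat).*2 * t).
Proof.
(* The slopes [q ^+ 2i] are pairwise distinct and never in ratio [q] (the
   exponents differ in parity), so each condition fails for at most one [t]. *)
move=> q0 q1; pose c (i : 'I_n) := q ^+ (i : nat).*2.
have c_inj : injective c.
  by move=> i j /(expr_inj_not_unity q0 q1)/double_inj/val_inj.
have cq i j : c i != q * c j.
  apply/eqP; rewrite -exprS => /(expr_inj_not_unity q0 q1)/(congr1 odd).
  by rewrite /= !odd_double.
have [Q1 Q10 Q1P] := @lin_polys_avoid _ _ (fun ij : 'I_n * 'I_n => ij.1 != ij.2)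
  (fun ij => y ij.1 - y ij.2) (fun ij => c ij.1 - c ij.2)
  (fun ij ij' => ltac:(by rewrite subr_eq0 (inj_eq c_inj))).
have [Q2 Q20 Q2P] := @lin_polys_avoid _ _ predT
  (fun ij : 'I_n * 'I_n => y ij.1 - q * y ij.2) (fun ij => c ij.1 - q * c ij.2)
  (fun ij _ => ltac:(by rewrite subr_eq0 cq)).
exists (Q1 * Q2) => [|t]; first by rewrite mulf_neq0.
rewrite rootM negb_or => /andP[/Q1P Q1t /Q2P Q2t]; split=> [i j eq_ij|i j].
  apply/eqP/negPn/negP => ij; move: (Q1t (i, j) ij); apply/negP/negPn/eqP.
  by transitivity (y i + c i * t - (y j + c j * t)); [ring | rewrite eq_ij subrr].
apply/eqP => eq_ij; move: (Q2t (i, j) isT); apply/negP/negPn/eqP.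
by transitivity (y i + c i * t - q * (y j + c j * t)); [ring | rewrite eq_ij subrr].
Qed.

End QGeneric.

Definition qcomm_rank1 (F : fieldType) n (q : F) (X Z : 'M[F]_n) :=
  exists (W : 'cV[F]_n) (U : 'rV[F]_n), X *m Z - q *: (Z *m X) = W *m U.

Lemma qcomm_rank1_conj (F : fieldType) n (q : F) (X Z G : 'M[F]_n) :
  G \in unitmx -> qcomm_rank1 q X Z ->
  qcomm_rank1 q (invmx G *m X *m G) (invmx G *m Z *m G).
Proof.
move=> Gu [W [U E]]; exists (invmx G *m W), (U *m G).
have conjM A B : (invmx G *m A *m G) *m (invmx G *m B *m G) = invmx G *m (A *m B) *m G.
  by rewrite !mulmxA mulmxK.
rewrite !conjM scalemxAl scalemxAr -mulmxBl -mulmxBr E.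
by rewrite !mulmxA.
Qed.

Lemma diag_mx_unit (F : fieldType) n (x : 'rV[F]_n) :
  (forall i, x 0 i != 0) -> diag_mx x \in unitmx.
Proof. by move=> x0; rewrite unitmxE det_diag unitfE; apply/prodf_neq0. Qed.

Section CauchyDiagonal.
Variables (F : fieldType) (n : nat) (q : F) (x : 'rV[F]_n).
Hypothesis x_gen : q_generic q (x 0).

Let C := cauchy_mx (x 0) (fun j => q * x 0 j).

Lemma cauchy_q_unit : q != 0 -> C \in unitmx.
Proof.
case: x_gen => x_inj xq q0; apply: cauchy_mx_unit => // i j /(mulfI q0).
exact: x_inj.
Qed.

Lemma qcomm_rank1_diag_cauchy : qcomm_rank1 q (diag_mx x) (C *m diag_mx x).
Proof.
exists (const_mx 1), x; apply/matrixP => i j.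
rewrite !(mul_mx_diag, mul_diag_mx) !mxE big_ord1 !mxE.
have xqij : x 0 i - q * x 0 j != 0 by rewrite subr_eq0; case: x_gen.
by field.
Qed.

Lemma qcomm_rank1_cauchy_diag : qcomm_rank1 q C^T (diag_mx x).
Proof.
exists (const_mx 1), (const_mx 1); apply/matrixP => i j.
rewrite !(mul_mx_diag, mul_diag_mx) !mxE big_ord1 !mxE.
have xqji : x 0 j - q * x 0 i != 0 by rewrite subr_eq0; case: x_gen.
by field.
Qed.

End CauchyDiagonal.

Definition q_generic_diagonalizable (F : fieldType) n (q : F) (A : 'M[F]_n) :=
  exists (x : 'rV[F]_n) (G : 'M[F]_n),
    [/\ q_generic q (x 0), G \in unitmx & A = invmx G *m diag_mx x *m G].

Section MxPoints.
Variables (n d : nat) (q : CC).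
Hypotheses (d_gt0 : (0 < d)%N) (q0 : q != 0).

Lemma Mx1_of_qcomm_rank1 (X Z : 'M[CC]_n) :
  X \in unitmx -> Z \in unitmx -> qcomm_rank1 q X Z ->
  exists p : pt n d, [/\ Mx1_embedded q p, ptX p = X & ptZ p = Z].
Proof.
(* [V] is chosen so that [X Z X^-1 Z^-1 = q (1 + W V)]. *)
move=> Xu Zu [W [U E]]; pose V := q^-1 *: (U *m invmx X *m invmx Z).
have XZE : X *m Z *m invmx X *m invmx Z = q%:M + q *: (W *m V).
  have -> : X *m Z = q *: (Z *m X) + W *m U by rewrite -E addrC subrK.
  have -> : q *: (W *m V) = W *m (U *m invmx X *m invmx Z).
    by rewrite /V scalemxAr scalerA mulfV // scale1r.
  rewrite !mulmxDl -!scalemxAl mulmxK // mulmxV //.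
  by rewrite scalemx1 !mulmxA.
have B_unit : 1%:M + W *m V \in unitmx.
  rewrite -(unitmxZ _ (_ : q \is a GRing.unit)) ?unitfE // scalerDr scalemx1 -XZE.
  by rewrite !unitmx_mul !unitmx_inv Xu Zu.
case: d d_gt0 => // d' _.
exists (X, Z, fun a : 'I_d'.+1 => if (a : nat) == 0%N then V else 0,
              fun a : 'I_d'.+1 => if (a : nat) == 0%N then W else 0).
split=> //; split; last by move=> a /negPf a0; rewrite /ptV /ptW /= a0.
split=> //; split=> //; split.
  by move=> a; rewrite /ptV /ptW /=; case: ifP; rewrite ?mulmx0 ?addr0 ?unitmx1.
rewrite /ptX /ptZ /ptV /ptW /= XZE big_ord_recl /=.
set rest := \big[mulmx/1%:M]_(i < d') _.
have -> : rest = 1%:M.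
  apply: (big_ind (fun M : 'M[CC]_n => M = 1%:M)) => [//|A B -> ->|i _].
    exact: mulmx1.
  by rewrite mulmx0 addr0 invmx1.
by rewrite mulmx1 -[q%:M]scalemx1 -scalerDr -scalemxAl mulmxV // scalemx1.
Qed.

Let conj_unit (G A : 'M[CC]_n) :
  G \in unitmx -> A \in unitmx -> invmx G *m A *m G \in unitmx.
Proof. by move=> Gu Au; rewrite !unitmx_mul unitmx_inv Gu Au. Qed.

Lemma Mx1_ptX_image A : q_generic_diagonalizable q A ->
  exists p : pt n d, Mx1_embedded q p /\ ptX p = A.
Proof.
move=> [x [G [x_gen Gu ->]]].
have Du : diag_mx x \in unitmx by apply: diag_mx_unit => i; apply: q_generic_neq0 x_gen.
have Zu : cauchy_mx (x 0) (fun j => q * x 0 j) *m diag_mx x \in unitmx.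
  by rewrite unitmx_mul cauchy_q_unit.
have [p [Mp pX _]] := Mx1_of_qcomm_rank1 (conj_unit Gu Du) (conj_unit Gu Zu)
  (qcomm_rank1_conj Gu (qcomm_rank1_diag_cauchy x_gen)).
by exists p.
Qed.

Lemma Mx1_ptZ_image A : q_generic_diagonalizable q A ->
  exists p : pt n d, Mx1_embedded q p /\ ptZ p = A.
Proof.
move=> [x [G [x_gen Gu ->]]].
have Du : diag_mx x \in unitmx by apply: diag_mx_unit => i; apply: q_generic_neq0 x_gen.
have Xu : (cauchy_mx (x 0) (fun j => q * x 0 j))^T \in unitmx.
  by rewrite unitmx_tr cauchy_q_unit.
have [p [Mp _ pZ]] := Mx1_of_qcomm_rank1 (conj_unit Gu Xu) (conj_unit Gu Du)
  (qcomm_rank1_conj Gu (qcomm_rank1_cauchy_diag x_gen)).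
by exists p.
Qed.

End MxPoints.

Lemma char_poly_conj (F : fieldType) n (A G : 'M[F]_n) : G \in unitmx ->
  char_poly (invmx G *m A *m G) = char_poly A.
Proof.
move=> Gu; rewrite /char_poly.
have -> : char_poly_mx (invmx G *m A *m G) =
    map_mx polyC (invmx G) *m char_poly_mx A *m map_mx polyC G.
  rewrite /char_poly_mx !map_mxM mulmxBr mulmxBl ?mulmxA; congr (_ - _).
  by rewrite scalar_mxC -mulmxA -map_mxM mulVmx // map_mx1 mulmx1.
rewrite !det_mulmx !det_map_mx mulrC mulrA -rmorphM -det_mulmx mulmxV //.
by rewrite det1 mul1r.
Qed.

Lemma char_poly_trig_codom (R : comNzRingType) n (T : 'M[R]_n) : is_trig_mx T ->
  char_poly T = \prod_(a <- codom (fun i => T i i)) ('X - a%:P).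
Proof. by move=> tT; rewrite char_poly_trig // codomE big_map big_enum. Qed.

Lemma trig_q_generic_diagonalizable (F : fieldType) n (q : F) (T : 'M[F]_n.+1) :
  is_trig_mx T -> q_generic q (fun i => T i i) -> q_generic_diagonalizable q T.
Proof.
move=> tT T_gen; have cpT := char_poly_trig_codom tT.
have [P Pu PT] : exists2 P : 'M[F]_n.+1, P \in unitmx & similar_diag P T.
  apply/diagonalizableP; exists (codom (fun i => T i i)).
    by apply/injectiveP; case: T_gen.
  by rewrite -cpT mxminpoly_dvd_char.
have [D] := similar_diagLR Pu PT; rewrite conjumx ?unitmx_inv // invmxK => TD.
exists D, P; split=> //; apply: q_generic_perm T_gen; apply: prod_XsubC_eq.
rewrite -cpT TD char_poly_conj // char_poly_trig_codom ?diag_mx_is_trig //.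
by rewrite !codomE; congr (\big[_/_]_(a <- _) _); apply: eq_map => i; rewrite mxE eqxx mulr1n.
Qed.

Lemma invmxM (F : fieldType) n (A B : 'M[F]_n) : A \in unitmx -> B \in unitmx ->
  invmx (A *m B) = invmx B *m invmx A.
Proof.
move=> Au Bu; have ABu : A *m B \in unitmx by rewrite unitmx_mul Au Bu.
by rewrite -[RHS]mulmx1 -(mulmxV ABu) !mulmxA mulmxKV // mulVmx // mul1mx.
Qed.

Lemma q_generic_diagonalizable_conj (F : fieldType) n (q : F) (A P : 'M[F]_n) :
  P \in unitmx -> q_generic_diagonalizable q A ->
  q_generic_diagonalizable q (invmx P *m A *m P).
Proof.
move=> Pu [x [G [x_gen Gu ->]]]; exists x, (G *m P).
by rewrite unitmx_mul Gu Pu invmxM // !mulmxA.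
Qed.

Lemma zdense_of_lines n (S : 'M[CC]_n -> Prop) :
  (forall A, exists (B : 'M[CC]_n) (Q : {poly CC}),
     Q != 0 /\ forall t, ~~ root Q t -> S (A + t *: B)) ->
  zdense (@mx_coord n) S.
Proof.
move=> lines f Pf fS A; have [B [Q [Q0 QS]]] := lines A.
have [|p fp] := @polyfun_along _ _ _ (fun t => A + t *: B) f _ Pf.
  move=> [i j]; exists ((A i j)%:P + B i j *: 'X) => t.
  by rewrite /mx_coord !mxE hornerD hornerC hornerZ hornerX mulrC.
have p0 : p = 0 by apply: (poly_eq0_off_root Q0) => t /QS /fS; rewrite fp.
by have := fp 0; rewrite scale0r addr0 p0 horner0.
Qed.

Lemma q_generic_diagonalizable_dense n (q : CC) :
  q != 0 -> (forall k, (0 < k)%N -> q ^+ k != 1) ->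
  zdense (@mx_coord n.+1) (q_generic_diagonalizable q).
Proof.
move=> q0 q1; apply: zdense_of_lines => A.
have [P /unitarymx_unit Pu] := Schur A (ltn0Sn n).
rewrite /similar_to conjumx // => tT.
set T := P *m A *m invmx P in tT.
pose E : 'M[CC]_n.+1 := diag_mx (\row_i q ^+ (i : nat).*2).
have [Q Q0 QT] := q_generic_line (fun i => T i i) q0 q1.
exists (invmx P *m E *m P), Q; split=> // t /QT Tt_gen.
have -> : A + t *: (invmx P *m E *m P) = invmx P *m (T + t *: E) *m P.
  by rewrite mulmxDr mulmxDl -scalemxAr -scalemxAl /T !mulmxA mulVmx // mul1mx mulmxKV.
apply: q_generic_diagonalizable_conj; rewrite ?unitmx_inv //.
apply: trig_q_generic_diagonalizable.
  apply/is_trig_mxP => i j lt_ij; move/is_trig_mxP: tT => /(_ i j lt_ij).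
  by rewrite !mxE => ->; rewrite -val_eqE /= ltn_eqF // mulr0 addr0.
by apply: eqfun_pred Tt_gen _ => i; rewrite !mxE eqxx mulr1n mulrC.
Qed.

(* [Sylvester_mx p r] has size [(size r).-1 + (size p).-1], which does not
   reduce for polynomials depending on a parameter; this copy fixes the size. *)
Definition Sylvester_mx_sized (R : nzRingType) (a b : nat) (p r : {poly R}) :
    'M[R]_(b.-1 + a.-1) :=
  \matrix_(i, j) match split i with
                 | inl k => p`_(j - k) *+ (k <= j)
                 | inr k => r`_(j - k) *+ (k <= j) end.

Lemma resultant_sized (R : nzRingType) (p r : {poly R}) a b :
  size p = a -> size r = b -> resultant p r = \det (Sylvester_mx_sized a b p r).
Proof.
move=> <- <-; congr (\det _); apply/matrixP => i j.
by rewrite Sylvester_mxE mxE.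
Qed.

Lemma size_deriv_char_poly (R : numDomainType) n (A : 'M[R]_n) :
  size (char_poly A)^`() = n.
Proof.
case: n A => [|n] A.
  by rewrite [char_poly A]size1_polyC ?size_char_poly // derivC size_poly0.
have lcA : (char_poly A)`_n.+1 = 1.
  by have := monicP (char_poly_monic A); rewrite /lead_coef size_char_poly.
by rewrite [_^`()]/deriv size_char_poly size_poly_eq //= lcA pnatr_eq0.
Qed.

Definition mx_disc (R : numDomainType) n (A : 'M[R]_n) : R :=
  \det (Sylvester_mx_sized n.+1 n (char_poly A) (char_poly A)^`()).

Lemma mx_disc_neq0 (R : numDomainType) n (A : 'M[R]_n) :
  (mx_disc A != 0) = separable_poly (char_poly A).
Proof.
rewrite /mx_disc -resultant_sized ?size_char_poly ?size_deriv_char_poly //.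
rewrite resultant_eq0 -leqNgt unlock /separable_poly coprimep_def eqn_leq.
by rewrite size_poly_gt0 gcdp_eq0 (negPf (monic_neq0 (char_poly_monic A))) andbT.
Qed.

Lemma separable_char_poly_diag (F : fieldType) n (x : 'rV[F]_n) :
  injective (x 0) -> separable_poly (char_poly (diag_mx x)).
Proof.
move=> x_inj; rewrite char_poly_trig_codom ?diag_mx_is_trig // separable_prod_XsubC.
rewrite (eq_codom (g := x 0)) => [|i]; last by rewrite mxE eqxx mulr1n.
exact/injectiveP.
Qed.

Lemma separable_char_poly_simple_spectrum n (A : 'M[CC]_n) :
  separable_poly (char_poly A) -> simple_spectrum A.
Proof.
have [r] := closed_field_poly_normal (char_poly A).
rewrite (monicP (char_poly_monic A)) scale1r => cpA.
rewrite cpA separable_prod_XsubC => r_uniq.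
exists r; split=> //; split.
  by have := size_char_poly A; rewrite cpA size_prod_XsubC => -[].
by apply/allP => a ar; rewrite eigenvalue_root_char cpA root_prod_XsubC.
Qed.

Lemma polyfun_mx_disc n : polyfun (@mx_coord n) (@mx_disc _ n).
Proof.
have cpA : polyfun_coefs (@mx_coord n) (fun A => char_poly A).
  by apply: polyfun_coefs_char_poly => i j; apply: (pf_coord _ (i, j)).
apply: polyfun_det => i j; case Ei: (split i) => [k|k].
  by apply: eqfun_pred (polyfun_muln (k <= j)%N (cpA (j - k)%N)) _ => A; rewrite mxE Ei.
apply: eqfun_pred (polyfun_muln (k <= j)%N (polyfun_muln (j - k).+1 (cpA (j - k).+1))) _.
by move=> A; rewrite mxE Ei coef_deriv.
Qed.

Lemma mx_disc_diag_neq0 n : mx_disc (diag_mx (\row_i ((i : nat)%:R : CC)) : 'M_n) != 0.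
Proof.
rewrite mx_disc_neq0 separable_char_poly_diag // => i j.
by rewrite !mxE => /eqP; rewrite eqr_nat => /eqP/val_inj.
Qed.

Lemma exists_mx_disc_neq0 (T : Type) n (M : T -> Prop)
    (proj : T -> 'M[CC]_n) :
  zdense (@mx_coord n) (fun A => exists p, M p /\ proj p = A) ->
  exists2 p, M p & mx_disc (proj p) != 0.
Proof.
move=> dM; have [_ [p [Mp <-]]] :=
  zdense_nonvanishing dM (@polyfun_mx_disc n) (mx_disc_diag_neq0 n).
by exists p.
Qed.

Unset Implicit Arguments.

Theorem mainTheorem7 (n d : nat) (q : CC) :
  (1 <= n)%N -> (1 <= d)%N -> q != 0 ->
  (forall k : nat, (0 < k)%N -> q ^+ k != 1) ->
  forall M : pt n d -> Prop,
    irred_component (@pt_coord n d) (Mx q) M ->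
    (forall p, Mx1_embedded q p -> M p) ->
    zdense (@mx_coord n) (fun A => exists p, M p /\ ptX p = A) /\
    zdense (@mx_coord n) (fun A => exists p, M p /\ ptZ p = A) /\
    (exists S : pt n d -> Prop,
       zclosed (@pt_coord n d) S /\ (exists p, M p /\ ~ S p) /\
       forall p, M p -> ~ S p -> simple_spectrum (ptX p) /\ simple_spectrum (ptZ p)).
Proof.
case: n => // n _ d_gt0 q0 q1 M [_ [M_irr _]] Mx1_M.
have dense := q_generic_diagonalizable_dense q0 q1.
have dX : zdense (@mx_coord n.+1) (fun A => exists p, M p /\ ptX p = A).
  apply: zdense_sub (dense n) _ => A /(Mx1_ptX_image d_gt0 q0)[p [/Mx1_M Mp pA]].
  by exists p.
have dZ : zdense (@mx_coord n.+1) (fun A => exists p, M p /\ ptZ p = A).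
  apply: zdense_sub (dense n) _ => A /(Mx1_ptZ_image d_gt0 q0)[p [/Mx1_M Mp pA]].
  by exists p.
have discX := polyfun_ptX d (@polyfun_mx_disc n.+1).
have discZ := polyfun_ptZ d (@polyfun_mx_disc n.+1).
split=> //; split=> //.
exists (fun p => mx_disc (ptX p) * mx_disc (ptZ p) = 0); split.
  exact: zclosed_zero_set (pf_mul discX discZ).
split.
  have [p Mp /eqP pXZ] := zirreducible_mul_neq0 M_irr discX discZ
    (exists_mx_disc_neq0 dX) (exists_mx_disc_neq0 dZ).
  by exists p.
move=> p _ /eqP; rewrite mulf_eq0 negb_or => /andP[pX pZ].
by split; apply: separable_char_poly_simple_spectrum;
  [move: pX | move: pZ]; rewrite mx_disc_neq0.
Qed.
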